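(* Let $f\colon\mathbb{R}^n\to\mathbb{R}$ be a strictly convex quadratic function, i.e. $f(x)=\tfrac12 x^TAx+b^Tx+c$ with $A$ symmetric positive definite, and let $x\in\mathbb{R}^n$ with $g=\nabla f(x)\neq 0$. For any initial symmetric positive definite matrix $H$, the procedure ''while $f(x-Hg)\ge f(x)$, replace $H$ by its unit-step BFGS update at $x$'' terminates after finitely many iterations.
   Context: For a $\mathcal{C}^1$-smooth convex $f\colon\mathbb{R}^n\to\mathbb{R}$, a point $x$ with $g=\nabla f(x)$, and a symmetric positive definite $H$, the unit-step BFGS update $H_+$ is: $s=-Hg$, $x_+=x+s$, $g_+=\nabla f(x_+)$, $y=g_+-g$, $V=I-\frac{sy^T}{s^Ty}$, $H_+=VHV^T+\frac{ss^T}{s^Ty}$ (defined when $s^Ty\ne0$, which holds automatically for strictly convex $f$ and $g\neq 0$). The point $x$ (and hence $g$) remains fixed during the procedure. *)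

From mathcomp Require Import all_boot all_order all_algebra.
From mathcomp Require Import reals.
Set Implicit Arguments. Unset Strict Implicit. Unset Printing Implicit Defensive.
Import Order.TTheory GRing.Theory Num.Theory.
Local Open Scope ring_scope.

Section Defs.
Variables (R : realType) (n : nat).

Definition vdot (u v : 'cV[R]_n) : R := (u^T *m v) 0 0.

Definition sym_pd (A : 'M[R]_n) : Prop :=
  A^T = A /\ forall v : 'cV[R]_n, v != 0 -> 0 < vdot v (A *m v).

Definition quad (A : 'M[R]_n) (b : 'cV[R]_n) (c : R) (z : 'cV[R]_n) : R :=
  2^-1 * vdot z (A *m z) + vdot b z + c.

(* ... and its gradient (for symmetric A): grad f(z) = A z + b. *)
Definition quad_grad (A : 'M[R]_n) (b : 'cV[R]_n) (z : 'cV[R]_n) : 'cV[R]_n :=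
  A *m z + b.

Definition bfgs_update (grad : 'cV[R]_n -> 'cV[R]_n) (x : 'cV[R]_n)
    (H : 'M[R]_n) : 'M[R]_n :=
  let g := grad x in
  let s := - (H *m g) in
  let y := grad (x + s) - g in
  let sy := vdot s y in
  let V := 1%:M - sy^-1 *: (s *m y^T) in
  V *m H *m V^T + sy^-1 *: (s *m s^T).

End Defs.

From mathcomp Require Import all_boot all_order all_algebra.
From mathcomp Require Import reals.
From mathcomp Require Import perm.
From mathcomp Require Import ring lra.
Set Implicit Arguments. Unset Strict Implicit. Unset Printing Implicit Defensive.
Import Order.TTheory GRing.Theory Num.Theory.
Local Open Scope ring_scope.

(* Write s = -H g and y = A s for the quadratic, and track B = H^-1.  The BFGS
   update gives B_+ = B - g g^T / (g^T H g) + y y^T / (s^T y), so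
   tr B_+ <= tr B + tr A (Cauchy-Schwarz: |A s|^2 <= tr A * s^T A s) and
   det B_+ = det B * s^T y / (g^T H g).  The unit step fails exactly when
   s^T A s >= 2 g^T H g, so every failure at least doubles det B.  Since B stays
   positive definite, |det B| <= n! (tr B)^n grows only polynomially with the
   number of updates: failures cannot go on forever. *)

Lemma det1D_rank1 (R : comRingType) (n : nat) (u : 'cV[R]_n) (v : 'rV[R]_n) :
  \det (1%:M + u *m v) = 1 + (v *m u) 0 0.
Proof.
pose X := block_mx 1%:M (- u) 0 (1%:M : 'M_1).
pose Y := block_mx (1%:M + u *m v) 0 v (1%:M : 'M_1).
pose Z := block_mx 1%:M 0 v (1%:M : 'M_1).
pose W := block_mx 1%:M (- u) 0 (1%:M + v *m u : 'M_1).
have XY_ZW : X *m Y = Z *m W.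
  rewrite !mulmx_block !mul1mx !mulmx1 !mul0mx !add0r !addr0 mulNmx.
  by rewrite addrK mulmxN addrCA addNr addr0.
have := congr1 determinant XY_ZW.
rewrite !det_mulmx det_ublock det_lblock det_lblock det_ublock !det1 !mul1r mulr1.
by move=> ->; rewrite det_mx11 !mxE.
Qed.

Lemma det_norm_le (R : numDomainType) (n : nat) (M : 'M[R]_n) (c : R) :
  (forall i j, `|M i j| <= c) -> `|\det M| <= n`!%:R * c ^+ n.
Proof.
move=> Mc; rewrite mulr_natl /determinant -card_Sn -sumr_const.
apply: le_trans (ler_norm_sum _ _ _) _; apply: ler_sum => p _.
rewrite normrM normrX normrN1 expr1n mul1r normr_prod.
rewrite -[X in c ^+ X](card_ord n) -prodr_const.
by apply: ler_prod => i _; rewrite normr_ge0 Mc.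
Qed.

Lemma exists_poly_lt_exp2 (R : archiRealFieldType) (n : nat) (D T a : R) :
  0 <= D -> 0 <= T -> 0 <= a -> exists k : nat, D * (T + k%:R * a) ^+ n < 2 ^+ k.
Proof.
move=> D_ge0 T_ge0 a_ge0.
(* k := j (n + 1) with j > D C^n:
   D (T + k a)^n <= D C^n (j + 1)^n < (j + 1)^(n + 1) <= 2^k *)
pose C := T + n.+1%:R * a.
have C_ge0 : 0 <= C by rewrite addr_ge0 // mulr_ge0.
pose j := Num.Def.archi_bound (D * C ^+ n).
have hj : D * C ^+ n < j%:R by apply: archi_boundP; rewrite mulr_ge0 // exprn_ge0.
exists (j * n.+1)%N.
have lin : T + (j * n.+1)%N%:R * a <= C * (j%:R + 1).
  rewrite natrM -mulrA /C; set m := n.+1%:R * a.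
  have : 0 <= m by rewrite mulr_ge0.
  have : (0 : R) <= j%:R by [].
  nra.
have {lin} pow : (T + (j * n.+1)%N%:R * a) ^+ n <= C ^+ n * (j%:R + 1) ^+ n.
  rewrite -exprMn; apply: lerXn2r => //; rewrite nnegrE.
    by rewrite addr_ge0 // mulr_ge0.
  by rewrite mulr_ge0 // addr_ge0.
apply: (le_lt_trans (ler_wpM2l D_ge0 pow)); rewrite mulrA.
apply: (lt_le_trans (y := (j%:R + 1) ^+ n.+1)).
  have j1_gt0 : (0 : R) < j%:R + 1 by rewrite ltr_pwDr.
  by rewrite exprS ltr_pM2r ?exprn_gt0 // (lt_le_trans hj) ?lerDl.
rewrite exprM; apply: lerXn2r; rewrite ?nnegrE ?addr_ge0 ?exprn_ge0 //.
by rewrite natr1 -natrX ler_nat ltn_expl.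
Qed.

Section InnerProduct.
Variables (R : realType) (n : nat).
Implicit Types (u v w : 'cV[R]_n) (M : 'M[R]_n).

Lemma vdotC u v : vdot u v = vdot v u.
Proof. by rewrite /vdot -[v^T *m u]trmxK trmx_mul trmxK [in RHS]mxE. Qed.

Lemma vdotDr u v w : vdot u (v + w) = vdot u v + vdot u w.
Proof. by rewrite /vdot mulmxDr mxE. Qed.

Lemma vdotDl u v w : vdot (u + v) w = vdot u w + vdot v w.
Proof. by rewrite vdotC vdotDr !(vdotC w). Qed.

Lemma vdotZr a u v : vdot u (a *: v) = a * vdot u v.
Proof. by rewrite /vdot -scalemxAr mxE. Qed.

Lemma vdotZl a u v : vdot (a *: u) v = a * vdot u v.
Proof. by rewrite vdotC vdotZr vdotC. Qed.

Lemma vdotNr u v : vdot u (- v) = - vdot u v.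
Proof. by rewrite -scaleN1r vdotZr mulN1r. Qed.

Lemma vdotNl u v : vdot (- u) v = - vdot u v.
Proof. by rewrite vdotC vdotNr vdotC. Qed.

Lemma vdot0r u : vdot u 0 = 0.
Proof. by rewrite /vdot mulmx0 mxE. Qed.

Lemma vdot_mulmx u M v : vdot u (M *m v) = vdot (M^T *m u) v.
Proof. by rewrite /vdot mulmxA trmx_mul trmxK. Qed.

Lemma vdot_ge0 u : 0 <= vdot u u.
Proof.
by rewrite /vdot mxE; apply: sumr_ge0 => i _; rewrite mxE -expr2 sqr_ge0.
Qed.

Lemma vdot_deltal i v : vdot (delta_mx i 0) v = v i 0.
Proof. by rewrite /vdot trmx_delta -rowE mxE. Qed.

Lemma outer_mulmx u v w : u *m v^T *m w = vdot v w *: u.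
Proof. by rewrite -mulmxA [v^T *m w]mx11_scalar mul_mx_scalar. Qed.

Lemma mulmx_outer u v w : w^T *m (u *m v^T) = vdot w u *: v^T.
Proof. by rewrite mulmxA [w^T *m u]mx11_scalar mul_scalar_mx. Qed.

Lemma mxtrace_outer u v : \tr (u *m v^T) = vdot v u.
Proof. by rewrite mxtrace_mulC trace_mx11. Qed.

End InnerProduct.

Section PositiveDefinite.
Variables (R : realType) (n : nat) (M : 'M[R]_n).
Hypothesis pdM : sym_pd M.

Lemma sym_pd_vdot_ge0 v : 0 <= vdot v (M *m v).
Proof.
have [->|v_neq0] := eqVneq v 0; first by rewrite mulmx0 vdot0r.
exact/ltW/pdM.2.
Qed.

Lemma sym_pd_CauchySchwarz u v :
  vdot u (M *m v) ^+ 2 <= vdot u (M *m u) * vdot v (M *m v).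
Proof.
have [->|v_neq0] := eqVneq v 0; first by rewrite mulmx0 !vdot0r expr0n mulr0.
have Mvv_gt0 : 0 < vdot v (M *m v) := pdM.2 v v_neq0.
have Mvu : vdot v (M *m u) = vdot u (M *m v) by rewrite vdot_mulmx pdM.1 vdotC.
set a := vdot u (M *m u) in Mvu *; set b := vdot u (M *m v) in Mvu *.
set c := vdot v (M *m v) in Mvv_gt0 *.
have := sym_pd_vdot_ge0 (u - (b / c) *: v).
rewrite mulmxBr -scalemxAr !(vdotDl, vdotDr, vdotNl, vdotNr, vdotZl, vdotZr).
rewrite -/a -/b -/c Mvu.
have -> : a - b / c * b + (- (b / c * b) - b / c * - (b / c * c)) =
    (a * c - b ^+ 2) / c by field; rewrite gt_eqF.
by rewrite ler_pdivlMr // mul0r subr_ge0.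
Qed.

Lemma sym_pd_diag_gt0 i : 0 < M i i.
Proof.
have delta_neq0 : delta_mx i 0 != 0 :> 'cV[R]_n.
  by apply/eqP => /matrixP/(_ i 0); rewrite !mxE !eqxx => /eqP; rewrite oner_eq0.
by have := pdM.2 _ delta_neq0; rewrite vdot_deltal -colE mxE.
Qed.

Lemma sym_pd_diag_le_trace i : M i i <= \tr M.
Proof.
rewrite /mxtrace (bigD1 i) //= lerDl.
by apply: sumr_ge0 => j _; apply/ltW/sym_pd_diag_gt0.
Qed.

Lemma sym_pd_trace_ge0 : 0 <= \tr M.
Proof. by apply: sumr_ge0 => i _; apply/ltW/sym_pd_diag_gt0. Qed.

Lemma sym_pd_entry_le_trace i j : `|M i j| <= \tr M.
Proof.
have := sym_pd_CauchySchwarz (delta_mx i 0) (delta_mx j 0).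
rewrite !vdot_deltal -!colE !mxE => CS.
have := sym_pd_diag_le_trace i; have := sym_pd_diag_le_trace j.
have := sym_pd_diag_gt0 i; have := sym_pd_diag_gt0 j.
rewrite ler_norml; move=> *; apply/andP; split; nra.
Qed.

Lemma sym_pd_normsq_le_trace v :
  vdot (M *m v) (M *m v) <= \tr M * vdot v (M *m v).
Proof.
rewrite {1}/vdot mxE /mxtrace mulr_suml; apply: ler_sum => i _.
have := sym_pd_CauchySchwarz (delta_mx i 0) v.
by rewrite -colE !vdot_deltal !mxE -expr2.
Qed.

Lemma sym_pd_det_le_trace : `|\det M| <= n`!%:R * \tr M ^+ n.
Proof. exact/det_norm_le/sym_pd_entry_le_trace. Qed.

Lemma sym_pd_unitmx : M \in unitmx.
Proof.
rewrite unitmxE unitfE; apply/det0P => -[v v_neq0 vM].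
have vT_neq0 : v^T != 0 by rewrite -(inj_eq trmx_inj) trmxK trmx0.
have := pdM.2 _ vT_neq0.
by rewrite -[M]pdM.1 -trmx_mul vM trmx0 vdot0r ltxx.
Qed.

Lemma sym_pd_invmx : sym_pd (invmx M).
Proof.
split; first by rewrite trmx_inv pdM.1.
move=> v v_neq0; have Mv : M *m (invmx M *m v) = v.
  by rewrite mulmxA mulmxV ?mul1mx //; apply: sym_pd_unitmx.
have Nv_neq0 : invmx M *m v != 0.
  by apply: contraNneq v_neq0 => Nv0; rewrite -Mv Nv0 mulmx0.
by rewrite -{1}Mv vdotC; apply: pdM.2.
Qed.

End PositiveDefinite.

Section Quadratic.
Variables (R : realType) (n : nat) (A : 'M[R]_n) (b : 'cV[R]_n) (c : R).

Lemma quad_gradD x s : quad_grad A b (x + s) = quad_grad A b x + A *m s.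
Proof. by rewrite /quad_grad mulmxDr addrAC. Qed.

Lemma quadD x s : A^T = A ->
  quad A b c (x + s) =
  quad A b c x + vdot (quad_grad A b x) s + 2^-1 * vdot s (A *m s).
Proof.
move=> symA; rewrite /quad /quad_grad mulmxDr !(vdotDl, vdotDr).
rewrite [vdot x (A *m s)]vdot_mulmx symA [vdot s (A *m x)]vdotC.
lra.
Qed.

Definition unit_step_fails (g : 'cV[R]_n) (H : 'M[R]_n) : bool :=
  2 * vdot g (H *m g) <= vdot (H *m g) (A *m (H *m g)).

Lemma quad_unit_step_ge x H : A^T = A ->
  (quad A b c x <= quad A b c (x - H *m quad_grad A b x)) =
  unit_step_fails (quad_grad A b x) H.
Proof.
move=> symA; rewrite quadD // mulmxN !(vdotNl, vdotNr) opprK.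
by apply/idP/idP; rewrite /unit_step_fails; lra.
Qed.

End Quadratic.

Definition bfgs_quad (R : realType) (n : nat) (A : 'M[R]_n) (g : 'cV[R]_n)
    (H : 'M[R]_n) : 'M[R]_n :=
  let s := - (H *m g) in let y := A *m s in let rho := (vdot s y)^-1 in
  let V := 1%:M - rho *: (s *m y^T) in
  V *m H *m V^T + rho *: (s *m s^T).

Lemma bfgs_update_quadE (R : realType) (n : nat) (A : 'M[R]_n) b x :
  bfgs_update (quad_grad A b) x =1 bfgs_quad A (quad_grad A b x).
Proof.
move=> H; rewrite /bfgs_update /bfgs_quad quad_gradD.
by rewrite [_ + A *m _ - _]addrAC subrr add0r.
Qed.

Section QuadraticUpdate.
Variables (R : realType) (n : nat) (A H : 'M[R]_n) (g : 'cV[R]_n).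
Hypotheses (pdA : sym_pd A) (pdH : sym_pd H) (g_neq0 : g != 0).

Local Notation s := (- (H *m g)).
Local Notation y := (A *m s).
Local Notation h := (vdot g (H *m g)).
Local Notation sy := (vdot s y).
Local Notation B := (invmx H).
Local Notation Hp := (bfgs_quad A g H).
Local Notation Bp := (B - h^-1 *: (g *m g^T) + sy^-1 *: (y *m y^T)).

Let h_gt0 : 0 < h. Proof. exact: pdH.2. Qed.

Let vdot_gs : vdot g s = - h. Proof. exact: vdotNr. Qed.

Let vdot_sg : vdot s g = - h. Proof. by rewrite vdotC. Qed.

Let sy_gt0 : 0 < sy.
Proof.
apply: pdA.2; apply/eqP => s0; move: vdot_gs; rewrite s0 vdot0r => /eqP.
by rewrite eq_sym oppr_eq0 gt_eqF.
Qed.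

Let Bs : B *m s = - g.
Proof. by rewrite mulmxN mulmxA mulVmx ?mul1mx ?sym_pd_unitmx. Qed.

Let sTB : s^T *m B = - g^T.
Proof. by rewrite -(sym_pd_invmx pdH).1 -trmx_mul Bs raddfN. Qed.

Lemma bfgs_quad_sym_pd : sym_pd Hp.
Proof.
rewrite /bfgs_quad; set V := 1%:M - _; split.
  by rewrite linearD /= linearZ /= !trmx_mul !trmxK pdH.1 mulmxA.
move=> v v_neq0.
have VTv : V^T *m v = v - (sy^-1 * vdot s v) *: y.
  rewrite /V linearB /= trmx1 linearZ /= trmx_mul trmxK mulmxBl mul1mx.
  by rewrite -scalemxAl outer_mulmx scalerA.
rewrite mulmxDl vdotDr -!mulmxA vdot_mulmx -scalemxAl outer_mulmx !vdotZr.
rewrite [vdot v s]vdotC -expr2.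
have [sv0 | sv_neq0] := eqVneq (vdot s v) 0.
  by rewrite sv0 expr0n mulr0 addr0 VTv sv0 mulr0 scale0r subr0 pdH.2.
have := sym_pd_vdot_ge0 pdH (V^T *m v).
have : 0 < sy^-1 * vdot s v ^+ 2 by rewrite mulr_gt0 ?invr_gt0 ?exprn_even_gt0.
lra.
Qed.

Lemma bfgs_quad_mulmx_inv : Hp *m Bp = 1%:M.
Proof.
rewrite /bfgs_quad; set V := 1%:M - _.
have sTBp : s^T *m Bp = y^T.
  rewrite mulmxDr mulmxBr sTB -!scalemxAr !mulmx_outer vdot_sg !scalerA.
  by rewrite mulrN !mulVf ?gt_eqF // scaleN1r scale1r opprK addNr add0r.
have VTBp : V^T *m Bp = B - h^-1 *: (g *m g^T).
  rewrite /V linearB /= trmx1 linearZ /= trmx_mul trmxK mulmxBl mul1mx.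
  by rewrite -scalemxAl -[y *m s^T *m _]mulmxA sTBp addrK.
have HVTBp : H *m (V^T *m Bp) = 1%:M + h^-1 *: (s *m g^T).
  rewrite VTBp mulmxBr mulmxV ?sym_pd_unitmx // -scalemxAr mulmxA.
  by rewrite mulNmx scalerN.
have Vs : V *m s = 0.
  rewrite /V mulmxBl mul1mx -scalemxAl outer_mulmx (vdotC y) scalerA.
  by rewrite mulVf ?gt_eqF // scale1r subrr.
have VHVTBp : V *m (H *m (V^T *m Bp)) = V.
  by rewrite HVTBp mulmxDr mulmx1 -scalemxAr mulmxA Vs mul0mx scaler0 addr0.
rewrite mulmxDl -scalemxAl -[s *m s^T *m _]mulmxA sTBp.
by rewrite -[V *m H *m V^T *m _]mulmxA -[V *m H *m _]mulmxA VHVTBp /V subrK.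
Qed.

Lemma invmx_bfgs_quad : invmx Hp = Bp.
Proof.
have [Hp_unit _] := mulmx1_unit bfgs_quad_mulmx_inv.
by rewrite -[invmx Hp]mulmx1 -bfgs_quad_mulmx_inv mulmxA mulVmx ?mul1mx.
Qed.

Lemma trace_invmx_bfgs_quad : \tr (invmx Hp) <= \tr B + \tr A.
Proof.
rewrite invmx_bfgs_quad mxtraceD raddfB /= !mxtraceZ !mxtrace_outer.
have : sy^-1 * vdot y y <= \tr A.
  by rewrite mulrC ler_pdivrMr // sym_pd_normsq_le_trace.
have : 0 <= h^-1 * vdot g g by rewrite mulr_ge0 ?vdot_ge0 // invr_ge0 ltW.
lra.
Qed.

Lemma det_invmx_bfgs_quad : \det (invmx Hp) = sy / h * \det B.
Proof.
pose w1 := h^-1 *: g + sy^-1 *: y.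
pose w2 := h^-1 *: (g + y).
(* s^T w1 = 0 and 1 + w2^T s = sy / h: only the right factor changes the determinant *)
have factor : Bp = (1%:M + w1 *m s^T) *m B *m (1%:M + s *m w2^T).
  rewrite mulmxDl mul1mx -[w1 *m s^T *m B]mulmxA sTB [w1 *m - _]mulmxN.
  rewrite mulmxDr mulmx1 [_ *m (s *m _)]mulmxA mulmxBl Bs outer_mulmx vdot_gs.
  (* freeze s and y so that the rewrites below do not distribute inside them *)
  rewrite /w1 /w2; set u := - (H *m g); set z := A *m u.
  rewrite !linearD /= !linearZ /= !(mulmxDl, mulmxDr, mulmxBl, mulNmx).
  rewrite -!scalemxAl !mulNmx.
  by apply/matrixP => i j; rewrite !mxE; field; rewrite !gt_eqF.
rewrite invmx_bfgs_quad factor !det_mulmx !det1D_rank1.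
rewrite -[(s^T *m w1) 0 0]/(vdot s w1) -[(w2^T *m s) 0 0]/(vdot w2 s).
rewrite /w1 /w2 vdotZl vdotDr vdotDl !vdotZr vdot_sg (vdotC y s) vdot_gs.
by field; rewrite !gt_eqF.
Qed.

Lemma det_invmx_bfgs_quad_ge :
  unit_step_fails A g H -> 2 * `|\det B| <= `|\det (invmx Hp)|.
Proof.
have -> : unit_step_fails A g H = (2 * h <= sy).
  by rewrite /unit_step_fails mulmxN vdotNl vdotNr opprK.
move=> fails; rewrite det_invmx_bfgs_quad normrM.
rewrite (ger0_norm (divr_ge0 (ltW sy_gt0) (ltW h_gt0))).
by rewrite ler_wpM2r // ler_pdivlMr.
Qed.

End QuadraticUpdate.

Lemma iter_bfgs_quad_invariant (R : realType) (n : nat) (A H : 'M[R]_n)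
    (g : 'cV[R]_n) (k : nat) :
  sym_pd A -> sym_pd H -> g != 0 ->
  (forall i, (i < k)%N -> unit_step_fails A g (iter i (bfgs_quad A g) H)) ->
  let Hk := iter k (bfgs_quad A g) H in
  [/\ sym_pd Hk, 2 ^+ k * `|\det (invmx H)| <= `|\det (invmx Hk)|
    & \tr (invmx Hk) <= \tr (invmx H) + k%:R * \tr A].
Proof.
move=> pdA pdH g_neq0; elim: k => [_ | k IHk fails] /=.
  by rewrite expr0 mul1r mul0r addr0.
have [pdHk detHk trHk] := IHk (fun i ik => fails i (ltnW ik)).
split; first exact: bfgs_quad_sym_pd.
  rewrite exprS -mulrA; apply: le_trans (ler_wpM2l _ detHk) _ => //.
  exact: det_invmx_bfgs_quad_ge pdA pdHk g_neq0 (fails k (ltnSn k)).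
have := trace_invmx_bfgs_quad pdA pdHk g_neq0; rewrite -natr1; lra.
Qed.

Lemma iter_bfgs_quad_fails_bound (R : realType) (n : nat) (A H : 'M[R]_n)
    (g : 'cV[R]_n) (k : nat) :
  sym_pd A -> sym_pd H -> g != 0 ->
  (forall i, (i < k)%N -> unit_step_fails A g (iter i (bfgs_quad A g) H)) ->
  2 ^+ k * `|\det (invmx H)| <= n`!%:R * (\tr (invmx H) + k%:R * \tr A) ^+ n.
Proof.
move=> pdA pdH g_neq0 fails.
have [pdHk detHk trHk] := iter_bfgs_quad_invariant pdA pdH g_neq0 fails.
have pdBk := sym_pd_invmx pdHk; have trBk_ge0 := sym_pd_trace_ge0 pdBk.
apply: (le_trans detHk); apply: (le_trans (sym_pd_det_le_trace pdBk)).
by rewrite ler_wpM2l // lerXn2r ?nnegrE // (le_trans trBk_ge0 trHk).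
Qed.

Theorem mainTheorem4 (R : realType) (n : nat) (A : 'M[R]_n) (b : 'cV[R]_n)
    (c : R) (x : 'cV[R]_n) (H : 'M[R]_n) :
  sym_pd A -> quad_grad A b x != 0 -> sym_pd H ->
  exists k : nat,
    quad A b c (x - iter k (bfgs_update (quad_grad A b) x) H *m quad_grad A b x)
      < quad A b c x.
Proof.
move=> pdA g_neq0 pdH; set g := quad_grad A b x.
have iterE k : iter k (bfgs_update (quad_grad A b) x) H = iter k (bfgs_quad A g) H.
  exact: eq_iter (bfgs_update_quadE A b x) k H.
have d_gt0 : 0 < `|\det (invmx H)|.
  by rewrite normr_gt0 -unitfE -unitmxE unitmx_inv sym_pd_unitmx.
have [K growth] := exists_poly_lt_exp2 n (divr_ge0 (ler0n R n`!) (ltW d_gt0))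
  (sym_pd_trace_ge0 (sym_pd_invmx pdH)) (sym_pd_trace_ge0 pdA).
have [[k _] /= decrease | no_decrease] := pickP (fun k : 'I_K.+1 =>
  quad A b c (x - iter k (bfgs_quad A g) H *m g) < quad A b c x).
  by exists k; rewrite iterE.
have fails i : (i < K)%N -> unit_step_fails A g (iter i (bfgs_quad A g) H).
  move=> iK; rewrite -(quad_unit_step_ge b c x _ pdA.1) leNgt.
  exact: negbT (no_decrease (Ordinal (leqW iK))).
have := iter_bfgs_quad_fails_bound pdA pdH g_neq0 fails.
by rewrite mulrAC ltr_pdivrMr // in growth; rewrite leNgt growth.
Qed.
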